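(* Let $v=[q;w_1,\ldots,w_n]$ be a WVG, $i$ a player, and $S\subseteq N\setminus\{i\}$ a coalition. Then $\phi_i(v)\le\phi_{\&(\{i\}\cup S)}(v_{\&(\{i\}\cup S)})\le 1$; that is, annexation never decreases a player's Shapley–Shubik index.
   Context: A weighted voting game (WVG) $v=[q;w_1,\ldots,w_n]$ has player set $N=\{1,\ldots,n\}$, nonnegative weights $w_j$ and quota $q$ with $0<q\le \sum_j w_j$; $v(X)=1$ if $\sum_{j\in X}w_j\ge q$ and $0$ otherwise. The Shapley–Shubik index of player $j$ in a game with player set $M$, $|M|=m$, is $\phi_j=\frac{1}{m!}\sum_{X\subseteq M,\,j\in X}(|X|-1)!\,(m-|X|)!\,(v(X)-v(X\setminus\{j\}))$. For $T\subseteq N$, the merged game $v_{\&T}$ is the WVG with the same quota on player set $(N\setminus T)\cup\{\&T\}$, where players outside $T$ keep their weights and $\&T$ has weight $\sum_{j\in T}w_j$. *)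

From HB Require Import structures.
From mathcomp Require Import all_boot all_order all_algebra.
Set Implicit Arguments. Unset Strict Implicit. Unset Printing Implicit Defensive.
Import Order.TTheory GRing.Theory Num.Theory.
Local Open Scope ring_scope.

Definition wvg (R : realFieldType) (P : finType) (q : R) (w : P -> R)
  (X : {set P}) : R :=
  if q <= \sum_(j in X) w j then 1 else 0.

Definition ssi (R : realFieldType) (P : finType) (q : R) (w : P -> R) (j : P) : R :=
  \sum_(X : {set P} | j \in X)
     (((#|X|.-1)`! * (#|P| - #|X|)`!)%:R / (#|P|`!)%:R)
       * (wvg q w X - wvg q w (X :\ j)).

(* Player set of the merged game v_{&T}: (N \ T) together with the new
   player &T, represented as None. *)
Definition merged_players (n : nat) (T : {set 'I_n}) : finType :=
  option {x : 'I_n | x \notin T}.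

Arguments merged_players : clear implicits.
Definition merged_w (R : realFieldType) (n : nat) (w : 'I_n -> R)
  (T : {set 'I_n}) (p : merged_players n T) : R :=
  match p with
  | None => \sum_(j in T) w j
  | Some x => w (val x)
  end.

Definition amp (n : nat) (T : {set 'I_n}) : merged_players n T := None.
Arguments merged_w {R n} w T p.
Arguments amp {n} T.

(* Write T := {i} u S, m := n - |T| + 1 for the size of the merged game, and
   w_m(s) := (s-1)! (m-s)! / m! for the Shapley weight of a coalition of size
   s in an m-player game.  The proof compares the two indices fibrewise:
   - coalitions of the merged game containing &T correspond bijectively to
     coalitions W of N with T ⊆ W, so phi_&T = sum_W w_m(|W\T|+1) D_T(W),
     where D_T(W) := v(W) - v(W \ T) (Lemma [ssi_merged]);
   - grouping the coalitions Z ∋ i of the original game by W := Z u T gives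
     phi_i = sum_W sum_(Z in fibre W) w_n(|Z|) D_i(Z);
   - inside a fibre, D_i(Z) <= D_T(W) by monotonicity of the game
     (Lemma [marginal_le_merged]), and the weights of a fibre add up exactly
     to w_m(|W\T|+1) (Lemma [fibre_weight]), by a Vandermonde-type identity
     for sums of products of factorials over subsets ([sum_subset_fact]).
   The upper bound phi <= 1 holds in every game, since marginal
   contributions are at most 1 and the Shapley weights sum to 1. *)
From HB Require Import structures.
From mathcomp Require Import all_boot all_order all_algebra zify.
Set Implicit Arguments. Unset Strict Implicit. Unset Printing Implicit Defensive.
Import Order.TTheory GRing.Theory Num.Theory.

Section SubsetSums.
Variables (T : finType) (R : Type) (idx : R) (op : Monoid.com_law idx).

Lemma big_subset_setU1 (A : {set T}) x (F : {set T} -> R) : x \in A ->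
  \big[op/idx]_(U : {set T} | (U \subset A) && (x \in U)) F U =
  \big[op/idx]_(V : {set T} | V \subset A :\ x) F (x |: V).
Proof.
move=> xA; rewrite (reindex_onto (fun V => x |: V) (fun U => U :\ x)); last first.
  by move=> U /andP[_ xU]; rewrite setD1K.
apply: eq_bigl => V; rewrite setU11 andbT subsetD1 subUset sub1set xA /=.
case xV: (x \in V); last by rewrite setU1K ?xV //= eqxx.
rewrite andbF; apply/negbTE; rewrite negb_and; apply/orP; right.
by apply/eqP => E; move: xV; rewrite -E setD11.
Qed.

Lemma big_subset_split (A : {set T}) x (F : {set T} -> R) : x \in A ->
  \big[op/idx]_(U : {set T} | U \subset A) F U =
  op (\big[op/idx]_(V : {set T} | V \subset A :\ x) F V)
     (\big[op/idx]_(V : {set T} | V \subset A :\ x) F (x |: V)).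
Proof.
move=> xA; rewrite (bigID (fun U : {set T} => x \in U)) /= Monoid.mulmC.
rewrite big_subset_setU1 //; congr (op _ _).
by apply: eq_bigl => U; rewrite subsetD1.
Qed.

End SubsetSums.

(* The factorial identity behind the Shapley weights:
     sum_(U ⊆ A) (a+|U|)! (b+|A|-|U|)! = a! b! (a+b+|A|+1)! / (a+b+1)!.
   It follows by induction on |A| from Pascal's rule, splitting on an x in A. *)
Lemma sum_subset_fact (T : finType) (A : {set T}) (a b : nat) :
  ((\sum_(U : {set T} | U \subset A) (a + #|U|)`! * (b + #|A| - #|U|)`!)
     * (a + b).+1`! = a`! * b`! * (a + b + #|A|).+1`!)%N.
Proof.
move Ek : #|A| => k; elim: k A a b Ek => [|k IH] A a b Ek.
  have -> : A = set0 by apply/eqP; rewrite -cards_eq0 Ek.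
  rewrite (eq_bigl (pred1 set0)); last by move=> U; rewrite subset0.
  by rewrite big_pred1_eq cards0 !addn0 subn0.
have [x xA] : exists x, x \in A by apply/set0Pn; rewrite -card_gt0 Ek.
have cardAx : #|A :\ x| = k by move: (cardsD1 x A); rewrite xA Ek add1n => -[].
rewrite (big_subset_split _ _ xA) /=.
rewrite (eq_bigr (fun V : {set T} => (a + #|V|)`! * (b.+1 + #|A :\ x| - #|V|)`!)%N);
  last by move=> V _; rewrite cardAx addSn addnS.
rewrite [X in (_ + X)%N](eq_bigr
    (fun V : {set T} => (a.+1 + #|V|)`! * (b + #|A :\ x| - #|V|)`!)%N); last first.
  move=> V; rewrite subsetD1 => /andP[_ xV].
  by rewrite cardsU1 xV !addnS subSS addSn cardAx.
apply/eqP; rewrite -(@eqn_pmul2l (a + b).+2) //; apply/eqP.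
rewrite mulnA (mulnC (a + b).+2) -mulnA -factS mulnDl.
have IHr := IH (A :\ x) a b.+1 cardAx; have IHl := IH (A :\ x) a.+1 b cardAx.
rewrite addnS in IHr; rewrite addSn in IHl.
rewrite cardAx IHr IHl !addnS !addSn (factS a) (factS b).
move: (a`!) (b`!) (((a + b + k).+2)`!) => fa fb N; nia.
Qed.

Local Open Scope ring_scope.

Definition ss_weight (R : realFieldType) (m s : nat) : R :=
  ((s.-1)`! * (m - s)`!)%:R / (m`!)%:R.

Lemma ss_weight_ge0 (R : realFieldType) (m s : nat) : 0 <= ss_weight R m s.
Proof. by rewrite divr_ge0 ?ler0n. Qed.

Lemma ss_weight_sum1 (R : realFieldType) (P : finType) (j : P) :
  \sum_(X : {set P} | j \in X) ss_weight R #|P| #|X| = 1.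
Proof.
rewrite (eq_bigl (fun X : {set P} => (X \subset setT) && (j \in X)));
  last by move=> X; rewrite subsetT.
rewrite (big_subset_setU1 _ _ (in_setT j)) /=.
have cardP : #|P| = (#|[set: P] :\ j|).+1.
  by move: (cardsD1 j [set: P]); rewrite in_setT cardsT add1n.
have := sum_subset_fact ([set: P] :\ j) 0 0.
rewrite !add0n fact0 !muln1 mul1n => factE.
rewrite -mulr_suml -natr_sum (eq_bigr (fun V : {set P} =>
  (#|V|`! * (#|[set: P] :\ j| - #|V|)`!)%N)); last first.
  by move=> V; rewrite subsetD1 => /andP[_ jV]; rewrite cardsU1 jV cardP subSS.
by rewrite factE -cardP divff // pnatr_eq0 -lt0n fact_gt0.
Qed.

Lemma wvg_diff_le1 (R : realFieldType) (P : finType) (q : R) (w : P -> R)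
  (X Y : {set P}) : wvg q w X - wvg q w Y <= 1.
Proof.
rewrite /wvg; case: ifP => _; case: ifP => _;
  rewrite ?subrr ?subr0 ?sub0r ?ler01 ?lexx //.
by rewrite (le_trans (lerN10 R)) ?ler01.
Qed.

Lemma ssi_le1 (R : realFieldType) (P : finType) (q : R) (w : P -> R) (j : P) :
  ssi q w j <= 1.
Proof.
rewrite /ssi -[X in _ <= X](ss_weight_sum1 R j); apply: ler_sum => X _.
by apply: ler_piMr; [exact: ss_weight_ge0 | exact: wvg_diff_le1].
Qed.

Section MergedCoalitions.
Variables (n : nat) (T : {set 'I_n}).

Definition outside (Z : {set 'I_n}) : {set {x : 'I_n | x \notin T}} :=
  [set x | val x \in Z].

Definition merge_coal (Z : {set 'I_n}) : {set merged_players n T} :=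
  amp T |: [set Some x | x in outside Z].

Definition unmerge_coal (X : {set merged_players n T}) : {set 'I_n} :=
  T :|: [set val x | x in [set x | Some x \in X]].

Lemma mem_merge_coal_Some (Z : {set 'I_n}) x : (Some x \in merge_coal Z) = (val x \in Z).
Proof. by rewrite !inE /= (mem_imset _ _ (@Some_inj _)) inE. Qed.

Lemma amp_notin_Some (B : {set {x : 'I_n | x \notin T}}) :
  amp T \notin [set Some x | x in B].
Proof. by apply/imsetP => -[]. Qed.

Lemma val_outside (P : pred {x : 'I_n | x \notin T}) (Z : {set 'I_n}) :
  (forall x, P x = (val x \in Z)) -> [set val x | x in [set x | P x]] = Z :\: T.
Proof.
move=> PZ; apply/setP => j; rewrite !inE.
have [jT|jT] /= := boolP (j \in T).
  by apply/imsetP => -[[y yT] _ E]; rewrite E (negbTE yT) in jT.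
by rewrite -[j]/(val (exist _ j jT : {x | x \notin T})) (mem_imset _ _ val_inj) inE PZ.
Qed.

Lemma unmerge_coalK (Z : {set 'I_n}) : unmerge_coal (merge_coal Z) = T :|: Z.
Proof.
rewrite /unmerge_coal (@val_outside _ Z); last by move=> x; rewrite mem_merge_coal_Some.
by apply/setP => j; rewrite !inE; case: (j \in T); case: (j \in Z).
Qed.

Lemma merge_coalK (X : {set merged_players n T}) :
  amp T \in X -> merge_coal (unmerge_coal X) = X.
Proof.
move=> ampX; apply/setP => -[x|]; last by rewrite setU11 ampX.
rewrite mem_merge_coal_Some /unmerge_coal inE (negbTE (valP x)) /=.
by rewrite (mem_imset _ _ val_inj) inE.
Qed.

Lemma card_merge_coal (Z : {set 'I_n}) : #|merge_coal Z| = #|Z :\: T|.+1.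
Proof.
rewrite cardsU1 amp_notin_Some add1n (card_imset _ (@Some_inj _)).
by rewrite -(@val_outside (fun x => val x \in Z) Z) // (card_imset _ val_inj).
Qed.

Lemma card_merged_players : #|merged_players n T| = (n - #|T|).+1.
Proof.
rewrite card_option card_sig; congr _.+1.
have := cardsC T; rewrite card_ord => cardTC.
by rewrite -[X in (X - _)%N]cardTC addKn; apply: eq_card => x; rewrite !inE.
Qed.

Variables (R : realFieldType) (w : 'I_n -> R).

Lemma sum_merge_coalD1 (Z : {set 'I_n}) :
  \sum_(p in merge_coal Z :\ amp T) merged_w w T p = \sum_(j in Z :\: T) w j.
Proof.
rewrite setU1K ?amp_notin_Some // big_imset /=; last by move=> x y _ _ [].
rewrite -(@val_outside (fun x => val x \in Z) Z) // big_imset //.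
by move=> x y _ _; apply: val_inj.
Qed.

Lemma sum_merge_coal (Z : {set 'I_n}) : T \subset Z ->
  \sum_(p in merge_coal Z) merged_w w T p = \sum_(j in Z) w j.
Proof.
move=> TZ; rewrite big_setU1 ?amp_notin_Some //= -(setU1K (amp_notin_Some _)).
by rewrite sum_merge_coalD1 [in RHS](big_setID T) /= (setIidPr TZ).
Qed.

Lemma ssi_merged (q : R) :
  ssi q (merged_w w T) (amp T) =
  \sum_(W : {set 'I_n} | T \subset W)
    ss_weight R (n - #|T|).+1 #|W :\: T|.+1 * (wvg q w W - wvg q w (W :\: T)).
Proof.
rewrite /ssi (reindex_onto merge_coal unmerge_coal) /=; last exact: merge_coalK.
have fibreE Z : (amp T \in merge_coal Z) && (unmerge_coal (merge_coal Z) == Z)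
    = (T \subset Z).
  rewrite setU11 unmerge_coalK /=.
  by apply/idP/idP => [/eqP/setUidPr | /setUidPr ->].
apply: eq_big => Z; first exact: fibreE.
rewrite fibreE => TZ.
by rewrite card_merge_coal card_merged_players /wvg sum_merge_coal // sum_merge_coalD1.
Qed.

End MergedCoalitions.

Section Monotone.
Variables (R : realFieldType) (P : finType) (q : R) (w : P -> R).
Hypothesis w_ge0 : forall j, 0 <= w j.

Lemma winning_mono (A B : {set P}) :
  A \subset B -> q <= \sum_(j in A) w j -> q <= \sum_(j in B) w j.
Proof.
move=> AB /le_trans; apply; rewrite [leRHS](big_setID A) /= (setIidPr AB).
by rewrite lerDl sumr_ge0.
Qed.

Lemma indicator_diff_le (b1 b2 b3 b4 : bool) :
  (b1 -> b3) -> (b4 -> b2) -> (b4 -> b3) ->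
  ((if b1 then 1 else 0) - (if b2 then 1 else 0) : R) <=
  (if b3 then 1 else 0) - (if b4 then 1 else 0).
Proof.
case: b1; case: b2; case: b3; case: b4 => //= h1 h2 h3;
  rewrite ?subrr ?subr0 ?sub0r ?lexx ?ler01 //;
  try (by move: (h1 erefl)); try (by move: (h2 erefl)); try (by move: (h3 erefl)).
all: by rewrite (le_trans (lerN10 R)) ?ler01.
Qed.

(* The marginal contribution of i to Z is at most that of the block T ∋ i
   to Z u T: if Z wins and Z \ i loses, then Z u T wins and (Z u T) \ T,
   which is contained in Z \ i, loses. *)
Lemma marginal_le_merged (i : P) (T Z : {set P}) : i \in T -> i \in Z ->
  wvg q w Z - wvg q w (Z :\ i) <= wvg q w (Z :|: T) - wvg q w ((Z :|: T) :\: T).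
Proof.
move=> iT iZ; rewrite /wvg.
apply: indicator_diff_le; apply: winning_mono.
- exact: subsetUl.
- apply/subsetP => j; rewrite !inE.
  by case: (eqVneq j i) => [->|_]; [rewrite iT | case: (j \in T); rewrite ?orbF].
- exact: subsetDl.
Qed.

End Monotone.

Lemma fibre_reindex (P : finType) (R : Type) (idx : R) (op : Monoid.com_law idx)
  (i : P) (S W : {set P}) (F : {set P} -> R) :
  i \notin S -> i |: S \subset W ->
  \big[op/idx]_(Z : {set P} | (i \in Z) && (Z :|: (i |: S) == W)) F Z =
  \big[op/idx]_(U : {set P} | U \subset S) F ((W :\: S) :|: U).
Proof.
move=> iS; rewrite subUset sub1set => /andP[iW SW].
rewrite (reindex_onto (fun U => (W :\: S) :|: U) (fun Z => Z :&: S)) /=; last first.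
  move=> Z /andP[iZ /eqP <-]; apply/setP => j; rewrite !inE.
  case: (eqVneq j i) => [->|_] /=; first by rewrite iZ (negbTE iS).
  by case: (j \in S); case: (j \in Z).
apply: eq_bigl => U; apply/idP/idP => [/andP[_ /eqP <-]|US]; first exact: subsetIr.
rewrite !inE iW (negbTE iS) /=; apply/andP; split; apply/eqP/setP => j; rewrite !inE.
  case: (eqVneq j i) => [->|_] /=; first by rewrite iW orbT.
  case jU: (j \in U); first by rewrite (subsetP SW) ?(subsetP US).
  by case jS: (j \in S); [rewrite orbT (subsetP SW) | case: (j \in W)].
case jU: (j \in U); first by rewrite (subsetP US).
by case: (j \in S); rewrite ?andbF ?andbT ?orbF.
Qed.

Lemma card_fibre (P : finType) (i : P) (S W U : {set P}) :
  i \notin S -> i |: S \subset W -> U \subset S ->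
  #|(W :\: S) :|: U| = (#|W :\: (i |: S)|.+1 + #|U|)%N.
Proof.
move=> iS; rewrite subUset sub1set => /andP[iW _] US.
have -> : W :\: S = i |: (W :\: (i |: S)).
  apply/setP => j; rewrite !inE.
  by case: (eqVneq j i) => [->|_] /=; [rewrite iW iS | case: (j \in S)].
rewrite cardsU cardsU1 !inE eqxx /= add1n.
suff -> : (i |: (W :\: (i |: S))) :&: U = set0 by rewrite cards0 subn0.
apply/setP => j; rewrite !inE; case jU: (j \in U); last by rewrite !andbF.
have jS := subsetP US j jU; rewrite jS orbT /= orbF andbT.
by apply: contraNF iS => /eqP <-.
Qed.

Lemma fibre_weight (R : realFieldType) n (i : 'I_n) (S W : {set 'I_n}) :
  i \notin S -> i |: S \subset W ->
  \sum_(Z : {set 'I_n} | (i \in Z) && (Z :|: (i |: S) == W)) ss_weight R n #|Z|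
  = ss_weight R (n - #|i |: S|).+1 #|W :\: (i |: S)|.+1.
Proof.
move=> iS TW; rewrite fibre_reindex //.
set T := i |: S; set y := #|W :\: T|.
have cardT : #|T| = #|S|.+1 by rewrite cardsU1 iS.
have cardW : (y + #|T| = #|W|)%N.
  by rewrite /y cardsD (setIidPr TW) subnK ?subset_leq_card.
have Wn : (#|W| <= n)%N by have := max_card (mem W); rewrite card_ord.
rewrite (eq_bigr (fun U : {set 'I_n} =>
  ((y + #|U|)`! * (n - #|T| - y + #|S| - #|U|)`!)%:R / n`!%:R)).
  rewrite -mulr_suml -natr_sum /ss_weight /= subSS.
  have := sum_subset_fact S y (n - #|T| - y).
  have -> : (y + (n - #|T| - y) = n - #|T|)%N by lia.
  have -> : ((n - #|T| + #|S|).+1 = n)%N by lia.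
  move=> factE; apply/eqP; rewrite eqr_div ?pnatr_eq0 -?lt0n ?fact_gt0 //.
  by rewrite -!natrM eqr_nat factE.
move=> U US; have := subset_leq_card US.
rewrite /ss_weight (card_fibre iS TW US) -/T -/y addSn /= => USle.
by have -> : (n - (y + #|U|).+1 = n - #|T| - y + #|S| - #|U|)%N by lia.
Qed.

Theorem mainTheorem15 (R : realFieldType) (n : nat) (q : R) (w : 'I_n -> R)
  (hw : forall j, 0 <= w j) (hq0 : 0 < q) (hqN : q <= \sum_(j < n) w j)
  (i : 'I_n) (S : {set 'I_n}) (hS : i \notin S) :
  ssi q w i <= ssi q (merged_w w (i |: S)) (amp (i |: S)) /\
  ssi q (merged_w w (i |: S)) (amp (i |: S)) <= 1.
Proof.
split; last exact: ssi_le1.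
rewrite ssi_merged /ssi card_ord.
have iT : i \in i |: S by rewrite setU11.
rewrite (partition_big (fun Z => Z :|: (i |: S)) (fun W => i |: S \subset W)) /=;
  last by move=> Z _; apply: subsetUr.
apply: ler_sum => W TW; rewrite -(fibre_weight R hS TW) mulr_suml.
apply: ler_sum => Z /andP[iZ /eqP <-].
by apply: ler_wpM2l; [exact: ss_weight_ge0 | exact: marginal_le_merged].
Qed.
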